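(* Let $N\ge 2$ and let $a_1,a_2,\dots,a_{2N+1}$ be a sequence in $\mathbb{Z}_N$ such that (i) $a_1=a_2=\cdots=a_N$; (ii) $a_i\ne a_1$ for all $i\ge N+1$; (iii) the terms $a_{N+1},\dots,a_{2N+1}$ are not all equal. Then there is a set of indices $I\subseteq\{1,\dots,2N+1\}$ with $|I|=N$ such that $\sum_{i\in I}a_i=0$, $I\cap\{1,\dots,N\}\neq\emptyset$, and $I\not\subseteq\{1,\dots,N\}$. *)

From mathcomp Require Import all_boot all_algebra.
Set Implicit Arguments.
Unset Strict Implicit.
Unset Printing Implicit Defensive.

From mathcomp Require Import all_boot all_algebra.
From mathcomp Require Import zify.
Import GRing.Theory.
Local Open Scope ring_scope.

(* Write c for the common value of the first N terms and b_i = a_i - c.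
   Then b vanishes on the first block {0, ..., N-1} and is nonzero and
   non-constant on the second block {N, ..., 2N} of N + 1 indices.  The heart
   of the proof is a zero-sum fact valid in any finite abelian group G
   (lemma zero_subsum):
     if e_0, ..., e_n are nonzero, not all equal and |G| <= n + 1, then some
     nonempty set S of fewer than |G| indices has zero e-sum.
   It is proved by rotating the indices cyclically so that e_0 <> e_1 and
   applying the pigeonhole principle to the |G| + 1 values
   e_0 + ... + e_(u-1) (u < |G|) and e_1: two equal partial sums give a
   zero-sum block, and a partial sum equal to e_1 gives the zero-sum set
   {0, 2, ..., u-1}.  For G = Z_N the set S, placed in the second block and
   padded with N - |S| >= 1 indices of the first block, is the required I: its
   a-sum equals its b-sum (lemma sum_Zp_shift), which is the b-sum of S, 0. *)

Definition initial_segment (n k : nat) : {set 'I_n} := [set v : 'I_n | (v < k)%N].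

Lemma card_initial_segment (n k : nat) :
  (k <= n)%N -> #|initial_segment n k| = k.
Proof.
move=> le_kn.
have widen_inj : injective (widen_ord le_kn).
  by move=> x y /(congr1 val) /= /val_inj.
rewrite -[in RHS](card_ord k) -cardsT -(card_imset _ widen_inj).
apply: eq_card => v; rewrite inE.
apply/idP/imsetP => [lt_vk | [i _ ->]]; last by rewrite /= ltn_ord.
by exists (Ordinal lt_vk) => //; apply: val_inj.
Qed.

Lemma card_sub_initial_segment (n k : nat) (S : {set 'I_n}) :
  (k <= n)%N -> S \subset initial_segment n k -> (#|S| <= k)%N.
Proof. by move=> le_kn /subset_leq_card; rewrite card_initial_segment. Qed.

Lemma shift_invariant_constant (T : eqType) (n : nat) (f : 'I_n.+1 -> T) :
  (forall t, f (t + Zp1) = f t) -> forall v, f v = f ord0.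
Proof.
move=> shift_inv v.
have -> : v = Zp1 *+ v.
  by apply: val_inj; rewrite Zp_mulrn /= modnMml mul1n modn_small.
by elim: (nat_of_ord v) => [|k IHk]; rewrite ?mulr0n // mulrSr shift_inv.
Qed.

Section ZeroSubsum.

Variable G : finZmodType.

Definition prefix_sum {n : nat} (u : nat) (e : 'I_n -> G) : G :=
  \sum_(v in initial_segment n u) e v.

Lemma prefix_sum0 (n : nat) (e : 'I_n -> G) : prefix_sum 0 e = 0.
Proof. by rewrite /prefix_sum (eq_bigl pred0) ?big_pred0_eq // => v; rewrite inE. Qed.

Lemma prefix_sum1 (n : nat) (e : 'I_n.+1 -> G) : prefix_sum 1 e = e ord0.
Proof. by rewrite /prefix_sum (big_pred1 ord0) // => v; rewrite inE ltnS leqn0. Qed.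

Lemma prefix_sum_split (n u w : nat) (e : 'I_n -> G) : (u <= w)%N ->
  prefix_sum w e =
  prefix_sum u e + \sum_(v in initial_segment n w :\: initial_segment n u) e v.
Proof.
move=> le_uw; rewrite /prefix_sum [LHS](big_setID (initial_segment n u)).
by congr (_ + _); apply: eq_bigl => v; rewrite !inE; lia.
Qed.

(* Pigeonhole on the |G| + 1 values e_0 + ... + e_(u-1) (u < |G|) and e_1:
   equal partial sums give a zero-sum block [u, w), and a partial sum equal to
   e_1 gives the zero-sum set {0, 2, ..., u-1} (u >= 2 since e_1 <> 0 and
   e_1 <> e_0). *)
Lemma zero_subsum_distinct_head (n : nat) (e : 'I_n.+1 -> G) :
  (#|G| <= n.+1)%N -> (forall v, e v != 0) -> e ord0 != e Zp1 ->
  exists S : {set 'I_n.+1},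
    [/\ (0 < #|S|)%N, (#|S| < #|G|)%N & \sum_(v in S) e v = 0].
Proof.
move=> le_Gn e_nz e01; set m := #|G|.
pose F (u : 'I_m.+1) := if (u < m)%N then prefix_sum u e else e Zp1.
have /injectivePn [u0 [w0 ne_uw eqF]] : ~~ injectiveb F.
  by apply/injectiveP => /leq_card; rewrite card_ord ltnn.
have [u [w [lt_uw {}eqF]]] : exists u w : 'I_m.+1, (u < w)%N /\ F u = F w.
  case: (ltngtP u0 w0) => [lt|lt|/val_inj eq]; [by exists u0, w0|by exists w0, u0|].
  by rewrite eq eqxx in ne_uw.
have lt_um : (u < m)%N by have := ltn_ord w; lia.
have small k (S : {set 'I_n.+1}) :
    (k < m)%N -> S \subset initial_segment n.+1 k -> (#|S| < m)%N.
  move=> lt_km /card_sub_initial_segment le_Sk.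
  by apply: leq_ltn_trans (le_Sk (leq_trans (ltnW lt_km) le_Gn)) lt_km.
move: eqF; rewrite /F lt_um; case: ifP => lt_wm eqF.
  exists (initial_segment n.+1 w :\: initial_segment n.+1 u); split.
  - by apply/card_gt0P; exists (inord u); rewrite !inE inordK //; lia.
  - by apply: (small w) => //; apply: subsetDl.
  - apply: (@addrI _ (prefix_sum u e)).
    by rewrite addr0 -prefix_sum_split ?eqF // ltnW.
have n_pos : (0 < n)%N.
  rewrite lt0n; apply: contra e01 => /eqP n0; apply/eqP; congr e.
  by apply: val_inj; rewrite /= n0.
have val_Zp1 : nat_of_ord (Zp1 : 'I_n.+1) = 1%N by rewrite /= modn_small.
have two_le_u : (2 <= u)%N.
  case: ltnP => // u_le1; exfalso; move: eqF.
  case: (nat_of_ord u) u_le1 => [|[|//]] _; last first.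
    by rewrite prefix_sum1 => /eqP; rewrite (negbTE e01).
  by rewrite prefix_sum0 => /esym/eqP; rewrite (negbTE (e_nz _)).
have Zp1_in : Zp1 \in initial_segment n.+1 u by rewrite inE val_Zp1.
exists (initial_segment n.+1 u :\ Zp1); split.
- apply/card_gt0P; exists ord0; rewrite !inE -val_eqE /= modn_small //; lia.
- by apply: (small u) => //; apply: subsetDl.
- apply: (@addrI _ (e Zp1)).
  by rewrite addr0 -{2}eqF /prefix_sum (big_setD1 _ Zp1_in).
Qed.

(* The zero-sum fact for a non-constant family of nonzero terms: rotate the
   indices so that the first two terms differ. *)
Lemma zero_subsum (n : nat) (e : 'I_n.+1 -> G) :
  (#|G| <= n.+1)%N -> (forall v, e v != 0) -> (exists x y, e x != e y) ->
  exists S : {set 'I_n.+1},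
    [/\ (0 < #|S|)%N, (#|S| < #|G|)%N & \sum_(v in S) e v = 0].
Proof.
move=> le_Gn e_nz [x [y exy]].
have [t shift_change] : exists t, e (t + Zp1) != e t.
  case: (pickP (fun t => e (t + Zp1) != e t)) => [t ne_t | all_eq]; first by exists t.
  have const : forall v, e v = e ord0.
    by apply: shift_invariant_constant => s; apply/eqP/negbFE/all_eq.
  by rewrite (const x) (const y) eqxx in exy.
have rot_inj : injective (fun v : 'I_n.+1 => v + t) by apply: addIr.
have rot_head : e (ord0 + t) != e (Zp1 + t) by rewrite add0r addrC eq_sym.
have [S [S_pos S_lt S_sum]] := @zero_subsum_distinct_head n (fun v => e (v + t))
  le_Gn (fun v => e_nz (v + t)) rot_head.
exists [set v + t | v in S]; rewrite card_imset //; split => //.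
by rewrite big_imset //= => v w _ _; apply: rot_inj.
Qed.

End ZeroSubsum.

Lemma sum_Zp_shift (I : finType) (N : nat) (A : {set I}) (f : I -> 'Z_N) (c : 'Z_N) :
  (1 < N)%N -> #|A| = N -> \sum_(i in A) f i = \sum_(i in A) (f i - c).
Proof.
by move=> gt1N cardA; rewrite sumrB sumr_const cardA -mulr_natr pchar_Zp // mulr0 subr0.
Qed.

Definition second_block {N : nat} (v : 'I_N.+1) : 'I_(2 * N).+1 := inord (N + v).

Lemma second_block_val (N : nat) (v : 'I_N.+1) : nat_of_ord (second_block v) = (N + v)%N.
Proof. by rewrite inordK //; have := ltn_ord v; lia. Qed.

Lemma second_block_inj (N : nat) : injective (@second_block N).
Proof.
by move=> v w /(congr1 val); rewrite /= !second_block_val => /addnI /val_inj.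
Qed.

Lemma second_blockK (N : nat) (i : 'I_(2 * N).+1) :
  (N <= i)%N -> second_block (inord (i - N)) = i.
Proof.
move=> Ni; apply: val_inj; rewrite /= second_block_val inordK ?subnKC //.
by have := ltn_ord i; lia.
Qed.

Theorem lemma3p1 (N : nat) (hN : (2 <= N)%N) (a : 'I_(2 * N).+1 -> 'Z_N) :
  (forall i j : 'I_(2 * N).+1, (i < N)%N -> (j < N)%N -> a i = a j) ->
  (forall j : 'I_(2 * N).+1, (N <= j)%N -> a j != a ord0) ->
  (exists j k : 'I_(2 * N).+1, [/\ (N <= j)%N, (N <= k)%N & a j != a k]) ->
  exists I : {set 'I_(2 * N).+1},
    [/\ #|I| = N, \sum_(i in I) a i = 0,
        (exists2 i, i \in I & (i < N)%N)
      & (exists2 i, i \in I & (N <= i)%N)].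
Proof.
move=> first_const second_ne [j [k [Nj Nk ajk]]]; set c := a ord0.
pose b i := a i - c.
have [S [S_pos S_lt S_sum]] : exists S : {set 'I_N.+1},
    [/\ (0 < #|S|)%N, (#|S| < N)%N & \sum_(v in S) b (second_block v) = 0].
  have := @zero_subsum _ N (fun v => b (second_block v)).
  rewrite card_ord Zp_cast //; apply=> // [v|].
    by rewrite subr_eq0 second_ne // second_block_val leq_addr.
  exists (inord (j - N)), (inord (k - N)).
  by rewrite /b !second_blockK // (inj_eq (addIr _)).
pose pad := initial_segment (2 * N).+1 (N - #|S|).
pose I := pad :|: second_block @: S.
have pad_disj : [disjoint pad & second_block @: S].
  apply/pred0P => i; rewrite /= inE; apply/negP => /andP [lt_i /imsetP [v _ def_i]].
  by move: lt_i; rewrite def_i second_block_val; lia.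
have card_I : #|I| = N.
  rewrite cardsU (disjoint_setI0 pad_disj) cards0 subn0 card_imset; last exact: second_block_inj.
  by rewrite card_initial_segment ?subnK 1?ltnW //; lia.
exists I; split => //.
- rewrite (@sum_Zp_shift _ _ _ a c hN card_I).
  rewrite (eq_bigl [predU pad & second_block @: S]); last by move=> i; rewrite !inE.
  rewrite bigU //= (big_imset _ (in2W (@second_block_inj N))) /= S_sum addr0.
  apply: big1 => i; rewrite inE => lt_i; rewrite /b (first_const i ord0) ?subrr //.
    exact: leq_trans lt_i (leq_subr _ _).
  exact: ltnW hN.
- by exists ord0; [rewrite !inE subn_gt0 S_lt | exact: ltnW hN].
- have /card_gt0P [v vS] := S_pos.
  by exists (second_block v); [rewrite inE imset_f ?orbT | rewrite second_block_val leq_addr].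
Qed.
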